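(* Let $\mathfrak{g}$ be a finite-dimensional complex Lie algebra which is not perfect (i.e. $[\mathfrak{g},\mathfrak{g}]\neq\mathfrak{g}$) and has non-trivial center. Then $\mathfrak{g}$ admits a non-trivial CPA-product.
   Context: A CPA-structure (CPA-product) on a Lie algebra $\mathfrak{g}$ is a bilinear product $x\cdot y$ on $\mathfrak{g}$ satisfying, for all $x,y,z$: $x\cdot y=y\cdot x$; $[x,y]\cdot z=x\cdot(y\cdot z)-y\cdot(x\cdot z)$; $x\cdot[y,z]=[x\cdot y,z]+[y,x\cdot z]$. It is non-trivial if $x\cdot y\neq0$ for some $x,y$. *)

From HB Require Import structures.
From mathcomp Require Import all_boot all_order all_algebra.
From mathcomp Require Import reals complex.
Set Implicit Arguments. Unset Strict Implicit. Unset Printing Implicit Defensive.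
Import Order.TTheory GRing.Theory Num.Theory.
Local Open Scope ring_scope.

Section LieDefs.
Variables (F : fieldType) (V : vectType F).

Definition bilinear_map (m : V -> V -> V) : Prop :=
  (forall (a : F) (x y z : V), m (a *: x + y) z = a *: m x z + m y z) /\
  (forall (a : F) (x y z : V), m x (a *: y + z) = a *: m x y + m x z).

Definition lie_bracket (br : V -> V -> V) : Prop :=
  [/\ bilinear_map br,
      (forall x : V, br x x = 0) &
      (forall x y z : V, br x (br y z) + br y (br z x) + br z (br x y) = 0)].

Definition in_derived (br : V -> V -> V) (x : V) : Prop :=
  exists (n : nat) (c : 'I_n -> F) (a b : 'I_n -> V),
    x = \sum_(i < n) c i *: br (a i) (b i).

Definition perfect (br : V -> V -> V) : Prop := forall x : V, in_derived br x.

Definition nontrivial_center (br : V -> V -> V) : Prop :=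
  exists z : V, z != 0 /\ forall x : V, br z x = 0.

Definition CPA_structure (br : V -> V -> V) (m : V -> V -> V) : Prop :=
  [/\ bilinear_map m,
      (forall x y : V, m x y = m y x),
      (forall x y z : V, m (br x y) z = m x (m y z) - m y (m x z)) &
      (forall x y z : V, m x (br y z) = br (m x y) z + br y (m x z))].

Definition CPA_nontrivial (m : V -> V -> V) : Prop :=
  exists x y : V, m x y != 0.

End LieDefs.

(* Since g is not perfect there is a nonzero linear form phi vanishing on
   [g,g]; with z a nonzero central element, x.y := phi(x) phi(y) z is a
   CPA-product. Indeed every product is central, so the derivation axiom has
   both sides 0, and x.(y.w) = phi(x) phi(y) phi(w) phi(z) z is symmetric in
   x and y, while [x,y].w = 0 because phi kills brackets. *)
From HB Require Import structures.
From mathcomp Require Import all_boot all_order all_algebra.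
From mathcomp Require Import reals complex.
From Stdlib Require Import Classical.
Set Implicit Arguments. Unset Strict Implicit. Unset Printing Implicit Defensive.
Import GRing.Theory.
Local Open Scope ring_scope.
Local Open Scope complex_scope.

Section Bilinear.
Variables (K : fieldType) (V : vectType K) (m : V -> V -> V).
Hypothesis m_bilin : bilinear_map m.

Lemma bilin0l z : m 0 z = 0.
Proof. by have := m_bilin.1 (-1) z z z; rewrite !scaleN1r !addNr. Qed.

Lemma bilin0r z : m z 0 = 0.
Proof. by have := m_bilin.2 (-1) z z z; rewrite !scaleN1r !addNr. Qed.

Lemma bilinDl x y z : m (x + y) z = m x z + m y z.
Proof. by have := m_bilin.1 1 x y z; rewrite !scale1r. Qed.

Lemma bilinDr x y z : m z (x + y) = m z x + m z y.
Proof. by have := m_bilin.2 1 z x y; rewrite !scale1r. Qed.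

Lemma bilinZl a x z : m (a *: x) z = a *: m x z.
Proof. by have := m_bilin.1 a x 0 z; rewrite !addr0 bilin0l addr0. Qed.

Lemma bilinZr a x z : m z (a *: x) = a *: m z x.
Proof. by have := m_bilin.2 a z x 0; rewrite !addr0 bilin0r addr0. Qed.

Lemma bilin_suml I (r : seq I) (P : pred I) (f : I -> V) z :
  m (\sum_(i <- r | P i) f i) z = \sum_(i <- r | P i) m (f i) z.
Proof. exact: (big_morph (m^~ z) (fun x y => bilinDl x y z) (bilin0l z)). Qed.

Lemma bilin_sumr I (r : seq I) (P : pred I) (f : I -> V) z :
  m z (\sum_(i <- r | P i) f i) = \sum_(i <- r | P i) m z (f i).
Proof. exact: (big_morph (m z) (fun x y => bilinDr x y z) (bilin0r z)). Qed.

Hypothesis m_alt : forall x, m x x = 0.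

Lemma bilin_anticomm x y : m x y = - m y x.
Proof.
apply/eqP; rewrite -addr_eq0; have := m_alt (x + y).
by rewrite bilinDl !bilinDr !m_alt add0r addr0 => ->.
Qed.

End Bilinear.

Section DerivedSpace.
Variables (K : fieldType) (V : vectType K) (br : V -> V -> V).

Definition basis_pairs : seq (V * V) :=
  [seq (x, y) | x <- (vbasis fullv : seq V), y <- (vbasis fullv : seq V)].

Definition derived_space : {vspace V} :=
  <<[seq br p.1 p.2 | p <- basis_pairs]>>%VS.

Lemma memv_derived x y : bilinear_map br -> br x y \in derived_space.
Proof.
move=> br_bilin; rewrite (coord_vbasis (memvf x)) (coord_vbasis (memvf y)).
rewrite bilin_suml //; apply: memv_suml => i _.
rewrite bilinZl // bilin_sumr //; apply: memvZ; apply: memv_suml => j _.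
rewrite bilinZr //; apply: memvZ; apply: memv_span.
apply/mapP; exists ((vbasis fullv)`_i, (vbasis fullv)`_j) => //.
by apply: allpairs_f; apply: mem_nth; rewrite size_tuple.
Qed.

Lemma in_derived_memv v : v \in derived_space -> in_derived br v.
Proof.
set S := [seq br p.1 p.2 | p <- basis_pairs] => Sv.
rewrite (@coord_span _ _ _ (in_tuple S) v Sv).
exists (size S), (coord (in_tuple S) ^~ v),
  (fun k => (basis_pairs`_k).1), (fun k => (basis_pairs`_k).2).
apply: eq_bigr => k _; congr (_ *: _).
have k_lt : (k < size basis_pairs)%N by rewrite -(size_map (fun p => br p.1 p.2)).
by rewrite (nth_map (0, 0)).
Qed.

End DerivedSpace.

Lemma exists_functional_separating (K : fieldType) (V : vectType K)
    (U : {vspace V}) x :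
  x \notin U ->
  exists phi : V -> K, [/\ scalar phi, {in U, forall u, phi u = 0} & phi x != 0].
Proof.
move=> xU; set p := (\1 - projv U)%VF.
have pE v : p v = v - projv U v by rewrite /p !lfunE /= !lfunE.
have px0 : p x != 0.
  by rewrite pE subr_eq0; apply: contra xU => /eqP ->; apply: memv_proj.
have /existsP [i coord_px] : [exists i, coord (vbasis fullv) i (p x) != 0].
  rewrite -negb_forall; apply: contra px0 => /forallP coord0.
  rewrite (coord_vbasis (memvf (p x))) big1 // => i _.
  by rewrite (eqP (coord0 i)) scale0r.
exists (fun v => coord (vbasis fullv) i (p v)); split=> //.
- by move=> a u v; rewrite !linearP.
- by move=> u Uu; rewrite pE projv_id // subrr linear0.
Qed.

Section RankOneCPA.
Variables (K : fieldType) (V : vectType K) (br : V -> V -> V).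
Variables (phi : V -> K) (z : V).
Hypotheses (br_bilin : bilinear_map br) (br_alt : forall x, br x x = 0).
Hypotheses (phi_scalar : scalar phi) (phi_br : forall x y, phi (br x y) = 0).
Hypothesis z_central : forall x, br z x = 0.

Lemma rank_one_CPA_structure :
  CPA_structure br (fun x y => (phi x * phi y) *: z).
Proof.
have phi0 : phi 0 = 0 by have := phi_scalar (-1) z z; rewrite scaleN1r mulN1r !addNr.
have phiZ c v : phi (c *: v) = c * phi v.
  by have := phi_scalar c v 0; rewrite !addr0 phi0 addr0.
split=> [|x y|x y w|x y w].
- split=> a x y w; rewrite phi_scalar scalerA.
    by rewrite mulrDl scalerDl mulrA.
  by rewrite mulrDr scalerDl mulrCA.
- by rewrite mulrC.
- by rewrite phi_br mul0r scale0r !phiZ !mulrA (mulrC (phi x)) subrr.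
- rewrite phi_br mulr0 scale0r bilinZl // bilinZr // z_central.
  by rewrite (bilin_anticomm br_bilin br_alt) z_central oppr0 !scaler0 addr0.
Qed.

End RankOneCPA.

Theorem proposition3p8 (R : realType) (V : vectType R[i]) (br : V -> V -> V) :
  lie_bracket br -> ~ perfect br -> nontrivial_center br ->
  exists m : V -> V -> V, CPA_structure br m /\ CPA_nontrivial m.
Proof.
case=> br_bilin br_alt _ not_perfect [z [z_neq0 z_central]].
have [x0 x0_notin] : exists x0, ~ in_derived br x0 by exact: not_all_ex_not.
have x0_notD : x0 \notin derived_space br by apply/negP => /in_derived_memv.
have [phi [phi_scalar phi_D phi_x0]] := exists_functional_separating x0_notD.
have phi_br x y : phi (br x y) = 0 by apply/phi_D/memv_derived.
exists (fun x y => (phi x * phi y) *: z); split.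
  exact: rank_one_CPA_structure.
by exists x0, x0; rewrite scaler_eq0 negb_or z_neq0 andbT mulf_neq0.
Qed.
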